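(* Let $n\geq 2$ and $m\geq 1$ be integers, let $K$ be an infinite field, and let $p(x_1,\ldots,x_m)\in K\langle x_1,\ldots,x_m\rangle$ be a noncommutative polynomial with zero constant term. Suppose $\mathrm{ord}(p)=r$ with $1<r<n-1$. Then \[ p(T_n(K))+p(T_n(K))=T_n(K)^{(r-1)}, \] i.e. every matrix in $T_n(K)^{(r-1)}$ is a sum of two elements of $p(T_n(K))$, and every such sum lies in $T_n(K)^{(r-1)}$. In particular, if $r=n-2$, then $p(T_n(K))=T_n(K)^{(n-3)}$.
   Context: $T_n(K)$ denotes the algebra of $n\times n$ upper triangular matrices over $K$. For an integer $t\geq 0$, $T_n(K)^{(t)}$ denotes the set of upper triangular $n\times n$ matrices whose $(i,j)$ entries are zero whenever $j-i\leq t$ (so $T_n(K)^{(t)}$ is the $(t+1)$-st power $J^{t+1}$ of the Jacobson radical $J$ of $T_n(K)$). For an algebra $\mathcal{A}$, $p(\mathcal{A})=\{p(a_1,\ldots,a_m): a_1,\ldots,a_m\in\mathcal{A}\}$, and $p(\mathcal{A})+p(\mathcal{A})=\{a+b: a,b\in p(\mathcal{A})\}$. The order $\mathrm{ord}(p)$ of a polynomial $p$ with zero constant term is the least positive integer $r$ such that $p(T_r(K))=\{0\}$ but $p(T_{r+1}(K))\neq\{0\}$, where $T_1(K)=K$; $p$ has order $0$ if $p(K)\neq\{0\}$. *)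

From HB Require Import structures.
From mathcomp Require Import all_boot all_order all_algebra.
Set Implicit Arguments. Unset Strict Implicit. Unset Printing Implicit Defensive.
Import GRing.Theory.
Local Open Scope ring_scope.

(* A noncommutative polynomial in K<x_1,...,x_m> is represented as a finite
   formal sum of terms c * x_{w_1} ... x_{w_l}, i.e. a list of pairs
   (coefficient, word); the word is a sequence of variable indices 'I_m. *)
Definition ncpoly (K : fieldType) (m : nat) := seq (K * seq 'I_m).

Definition const_term (K : fieldType) (m : nat) (p : ncpoly K m) : K :=
  \sum_(t <- p | nilp t.2) t.1.

Definition nc_eval (K : fieldType) (m k : nat) (p : ncpoly K m)
  (a : 'I_m -> 'M[K]_k) : 'M[K]_k :=
  \sum_(t <- p) t.1 *: \big[mulmx/1%:M]_(i <- t.2) a i.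

Definition upper_tri (K : fieldType) (k : nat) (A : 'M[K]_k) : Prop :=
  forall i j : 'I_k, (j < i)%N -> A i j = 0.

(* T_k(K)^(t): entries (i,j) are zero whenever j - i <= t (incl. j < i) *)
Definition in_Tt (K : fieldType) (k t : nat) (A : 'M[K]_k) : Prop :=
  forall i j : 'I_k, (j <= i + t)%N -> A i j = 0.

Definition in_pimage (K : fieldType) (m k : nat) (p : ncpoly K m)
  (A : 'M[K]_k) : Prop :=
  exists a : 'I_m -> 'M[K]_k, (forall l, upper_tri (a l)) /\ nc_eval p a = A.

Definition vanishes_on_T (K : fieldType) (m : nat) (p : ncpoly K m) (k : nat) : Prop :=
  forall A : 'M[K]_k, in_pimage p A -> A = 0.

(* ord(p) = r, for r positive: r is the least positive integer with
   p(T_r(K)) = {0} but p(T_{r+1}(K)) <> {0}  (T_1(K) = 'M_1 ~ K). *)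
Definition has_order (K : fieldType) (m : nat) (p : ncpoly K m) (r : nat) : Prop :=
  (0 < r)%N /\ vanishes_on_T p r /\ ~ vanishes_on_T p r.+1 /\
  (forall s, (0 < s)%N -> (s < r)%N -> ~ (vanishes_on_T p s /\ ~ vanishes_on_T p s.+1)).

Definition infinite_field (K : fieldType) : Prop :=
  forall s : seq K, exists x : K, x \notin s.

From mathcomp Require Import all_boot all_order all_algebra.
From mathcomp Require Import zify.
From Stdlib Require Import Classical.
Set Implicit Arguments. Unset Strict Implicit. Unset Printing Implicit Defensive.
Import GRing.Theory.
Local Open Scope ring_scope.

(* 1. p(T_n(K)) is contained in T_n(K)^(r-1): restricting an evaluation to an
      r x r diagonal block commutes with evaluation (nc_eval_morph), and p
      vanishes on T_r(K) (image_in_Tt).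
   2. p(T_n(K)) is stable under conjugation by invertible upper triangular
      matrices and increasing embeddings carry p(T_k(K)) into p(T_n(K)).  Since
      p does not vanish on T_{r+1}(K), embedding and diagonal rescaling give
      every multiple of a matrix unit E_{i,j} with j - i >= r (unit_in_image).
   3. Over an infinite field a generic segment X + t (Y - X) of arguments makes
      finitely many entries nonzero at once, so some element of p(T_n(K)) has
      a full r-th superdiagonal (full_band_value).
   4. From such an element, diagonal and elementary conjugations install the
      entries of any Z in T_n(K)^(r-1) with a full band one at a time
      (image_of_full_band); every matrix of T_n(K)^(r-1) is a sum of two such
      Z (split_full_band), and for n = r + 2 a direct case analysis on the
      three free entries shows p(T_{r+2}(K)) = T_{r+2}(K)^(r-1) (small_case). *)

Section Evaluation.
Variables (K : fieldType) (m : nat) (p : ncpoly K m).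
Hypothesis p_const0 : const_term p = 0.

Lemma nc_eval_nonconst (k : nat) (a : 'I_m -> 'M[K]_k) :
  nc_eval p a = \sum_(t <- p | ~~ nilp t.2) t.1 *: \big[mulmx/1%:M]_(i <- t.2) a i.
Proof.
rewrite /nc_eval (bigID (fun t : K * seq 'I_m => nilp t.2)) /=.
rewrite (eq_bigr (fun t : K * seq 'I_m => t.1 *: (1%:M : 'M[K]_k))).
  by rewrite -scaler_suml -/(const_term p) p_const0 scale0r add0r.
by case=> c [|x w] //= _; rewrite big_nil.
Qed.

(* A linear map that is multiplicative on a product-closed class S of matrices
   commutes with evaluating p at arguments taken from S (no unit is needed,
   precisely because p has no constant term). *)
Lemma nc_eval_morph (k k' : nat) (phi : 'M[K]_k -> 'M[K]_k') (S : 'M[K]_k -> Prop)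
    (a : 'I_m -> 'M[K]_k) :
  (forall A B, phi (A + B) = phi A + phi B) ->
  (forall c A, phi (c *: A) = c *: phi A) ->
  phi 0 = 0 ->
  (forall A B, S A -> S B -> S (A *m B)) ->
  (forall A B, S A -> S B -> phi (A *m B) = phi A *m phi B) ->
  (forall l, S (a l)) ->
  phi (nc_eval p a) = nc_eval p (fun l => phi (a l)).
Proof.
move=> phiD phiZ phi0 SM phiM Sa.
have word x w : S (\big[mulmx/1%:M]_(i <- x :: w) a i) /\
    phi (\big[mulmx/1%:M]_(i <- x :: w) a i) =
    \big[mulmx/1%:M]_(i <- x :: w) phi (a i).
  elim: w x => [|y w IH] x; first by rewrite !big_cons !big_nil !mulmx1.
  have [Sw phiw] := IH y; rewrite !big_cons in Sw phiw *.
  rewrite -phiw; split; [exact: SM | exact: phiM].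
rewrite !nc_eval_nonconst (big_morph phi phiD phi0).
by apply: eq_bigr => -[c [|x w]] //= _; rewrite phiZ (proj2 (word x w)).
Qed.

Lemma nc_eval_ext (k : nat) (a b : 'I_m -> 'M[K]_k) :
  (forall l, a l = b l) -> nc_eval p a = nc_eval p b.
Proof. by move=> eq_ab; apply: eq_bigr => t _; under eq_bigr do rewrite eq_ab. Qed.

Lemma image0 (k : nat) : in_pimage p (0 : 'M[K]_k).
Proof.
exists (fun _ => 0); split; first by move=> l i j _; rewrite mxE.
symmetry; apply: (@nc_eval_morph k k (fun _ => 0) (fun _ => True) (fun _ => 0)) => //= *.
- by rewrite addr0.
- by rewrite scaler0.
- by rewrite mulmx0.
Qed.

End Evaluation.

Lemma upper_tri_mul (K : fieldType) (n : nat) (A B : 'M[K]_n) :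
  upper_tri A -> upper_tri B -> upper_tri (A *m B).
Proof.
move=> uA uB i j ji; rewrite mxE big1 // => z _.
case: (ltnP z i) => zi; first by rewrite uA // mul0r.
by rewrite uB ?mulr0 //; apply: leq_trans ji zi.
Qed.

Lemma upper_tri_eval (K : fieldType) (m n : nat) (p : ncpoly K m) (a : 'I_m -> 'M[K]_n) :
  (forall l, upper_tri (a l)) -> upper_tri (nc_eval p a).
Proof.
move=> ua i j ji; rewrite /nc_eval summxE big1 // => t _; rewrite mxE.
suff -> : (\big[mulmx/1%:M]_(l <- t.2) a l) i j = 0 by rewrite mulr0.
elim: t.2 i j ji => [|x w IH] i j ji; last by rewrite big_cons; apply: upper_tri_mul.
by rewrite big_nil mxE; case: eqP => // ij; move: ji; rewrite ij ltnn.
Qed.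

Lemma sum_over_range (K : fieldType) (k n : nat) (f : 'I_k -> 'I_n) (G : 'I_n -> K) :
  injective f -> (forall z, z \notin codom f -> G z = 0) ->
  \sum_z G z = \sum_w G (f w).
Proof.
move=> f_inj G0; rewrite -[RHS](big_image _ _ _ xpredT) [RHS]big_uniq; last first.
  by apply/injectiveP.
by rewrite [LHS](bigID (mem (codom f))) /= [X in _ + X]big1 ?addr0.
Qed.

(* Restricting upper triangular matrices to a block of consecutive indices
   s, s+1, ..., s+k-1 is multiplicative: every index of the product that lies
   outside the block contributes zero. *)
Lemma block_mul (K : fieldType) (k n s : nat) (f : 'I_k -> 'I_n) (A B : 'M[K]_n) :
  (forall u, val (f u) = s + u)%N -> upper_tri A -> upper_tri B ->
  mxsub f f (A *m B) = mxsub f f A *m mxsub f f B.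
Proof.
move=> fE uA uB; apply/matrixP => u v; rewrite !mxE.
have f_inj : injective f by move=> x y /(congr1 val); rewrite !fE => /addnI/val_inj.
rewrite (sum_over_range (G := fun z => A (f u) z * B z (f v)) f_inj).
  by apply: eq_bigr => w _; rewrite !mxE.
move=> z zf; case: (ltnP z s) => zs.
  by rewrite uA ?mul0r // fE; apply: leq_trans zs (leq_addr _ _).
case: (ltnP z (s + k)) => zsk; last by rewrite uB ?mulr0 // fE; have := ltn_ord v; lia.
have zk : (z - s < k)%N by rewrite ltn_subLR.
case/negP: zf; apply/codomP; exists (Ordinal zk).
by apply: val_inj; rewrite /= fE subnKC.
Qed.

(* If p vanishes on T_r(K) then p(T_n(K)) lies in T_n(K)^(r-1): every entry
   (i,j) with j - i < r sits inside some r x r diagonal block, and the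
   restriction of an evaluation to that block is an evaluation on T_r(K). *)
Lemma image_in_Tt (K : fieldType) (m n r : nat) (p : ncpoly K m) (A : 'M[K]_n) :
  const_term p = 0 -> vanishes_on_T p r -> (0 < r)%N -> (r <= n)%N ->
  in_pimage p A -> in_Tt r.-1 A.
Proof.
move=> p0 pr r0 rn [a [ua <-]] i j ij.
pose s := minn i (n - r).
have sP (u : 'I_r) : (s + u < n)%N by have := ltn_ord u; rewrite /s; lia.
pose f (u : 'I_r) : 'I_n := Ordinal (sP u).
have fE u : val (f u) = (s + u)%N by [].
have blk0 : mxsub f f (nc_eval p a) = 0.
  rewrite (@nc_eval_morph K m p p0 n r (mxsub f f) (@upper_tri K n) a) //.
  - apply: pr; exists (fun l => mxsub f f (a l)); split=> // l u v vu.
    by rewrite mxE; apply: ua; rewrite !fE ltn_add2l.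
  - by move=> M N; apply/matrixP => u v; rewrite !mxE.
  - by move=> c M; apply/matrixP => u v; rewrite !mxE.
  - by apply/matrixP => u v; rewrite !mxE.
  - exact: upper_tri_mul.
  - by move=> M N; apply: block_mul.
case: (ltnP j s) => js; first by apply: upper_tri_eval => //; rewrite /s in js *; lia.
have iP : (i - s < r)%N by rewrite /s; have := ltn_ord i; lia.
have jP : (j - s < r)%N by rewrite /s; have := ltn_ord j; lia.
have := congr1 (fun M : 'M[K]_r => M (Ordinal iP) (Ordinal jP)) blk0; rewrite !mxE.
have -> : f (Ordinal iP) = i by apply: val_inj; rewrite /= subnKC // /s; lia.
by have -> : f (Ordinal jP) = j by apply: val_inj; rewrite /= subnKC.
Qed.

Lemma corner_form (K : fieldType) (r : nat) (A : 'M[K]_r.+1) :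
  in_Tt r.-1 A -> A = A ord0 ord_max *: delta_mx ord0 ord_max.
Proof.
move=> AT; apply/matrixP => i j; rewrite !mxE.
have [/andP[/eqP i0 /eqP jr] | ij] := boolP ((i == ord0) && (j == ord_max)).
  by rewrite i0 jr mulr1.
rewrite mulr0; apply: AT; have := ltn_ord i; have := ltn_ord j.
by move: ij; rewrite -!(inj_eq val_inj) /=; lia.
Qed.

Section Conjugation.
Variables (K : fieldType) (m : nat) (p : ncpoly K m).
Hypothesis p_const0 : const_term p = 0.

Lemma conj_eval (k k' : nat) (a : 'I_m -> 'M[K]_k) (L : 'M[K]_(k', k))
    (R : 'M[K]_(k, k')) :
  R *m L = 1%:M -> L *m nc_eval p a *m R = nc_eval p (fun l => L *m a l *m R).
Proof.
move=> RL; apply: (@nc_eval_morph K m p p_const0 k k' (fun A => L *m A *m R)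
  (fun _ => True)) => //.
- by move=> A B; rewrite mulmxDr mulmxDl.
- by move=> c A; rewrite -scalemxAr -scalemxAl.
- by rewrite mulmx0 mul0mx.
- by move=> A B _ _; rewrite !mulmxA -[L *m A *m R *m L]mulmxA RL mulmx1.
Qed.

Lemma image_conj (n : nat) (Y U V : 'M[K]_n) :
  upper_tri U -> upper_tri V -> V *m U = 1%:M ->
  in_pimage p Y -> in_pimage p (U *m Y *m V).
Proof.
move=> uU uV VU [a [ua <-]]; exists (fun l => U *m a l *m V); split.
  by move=> l; apply: upper_tri_mul => //; apply: upper_tri_mul.
by rewrite conj_eval.
Qed.

End Conjugation.

Section Embedding.
Variables (K : fieldType) (k n : nat) (s : 'I_k -> 'I_n).

Definition sel : 'M[K]_(k, n) := rowsub s 1%:M.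
Definition emb (A : 'M[K]_k) : 'M[K]_n := sel^T *m A *m sel.

Lemma sel_mul_tr : injective s -> sel *m sel^T = 1%:M.
Proof.
move=> s_inj; apply/matrixP => u v.
by rewrite /sel mul_rowsub_mx mul1mx trmx_mxsub !mxE (inj_eq s_inj) eq_sym.
Qed.

Lemma emb_delta (u v : 'I_k) : emb (delta_mx u v) = delta_mx (s u) (s v).
Proof.
have row_sel (w : 'I_k) : delta_mx 0 w *m sel = delta_mx (0 : 'I_1) (s w).
  by rewrite -rowE row_rowsub rowE mulmx1.
rewrite /emb -(mul_delta_mx (0 : 'I_1) u v) mulmxA -mulmxA row_sel.
by rewrite -[delta_mx u 0]trmxK -trmx_mul trmx_delta row_sel trmx_delta mul_delta_mx.
Qed.

Lemma emb_expand (A : 'M[K]_k) :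
  emb A = \sum_u \sum_v A u v *: delta_mx (s u) (s v).
Proof.
rewrite {1}(matrix_sum_delta A) /emb mulmx_sumr mulmx_suml; apply: eq_bigr => u _.
rewrite mulmx_sumr mulmx_suml; apply: eq_bigr => v _.
by rewrite -scalemxAr -scalemxAl -/(emb _) emb_delta.
Qed.

Hypothesis s_mono : forall u v : 'I_k, (u < v)%N -> (s u < s v)%N.

Lemma incr_inj : injective s.
Proof.
move=> u v suv; apply: val_inj; case: (ltngtP u v) => // uv.
- by have := s_mono uv; rewrite suv ltnn.
- by have := s_mono uv; rewrite suv ltnn.
Qed.

Lemma emb_upper (A : 'M[K]_k) : upper_tri A -> upper_tri (emb A).
Proof.
move=> uA x y yx; rewrite emb_expand summxE big1 // => u _.
rewrite summxE big1 // => v _; rewrite mxE.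
case: (ltnP v u) => vu; first by rewrite uA // mul0r.
have suv : (s u <= s v)%N.
  by case: (ltngtP u v) vu => // [uv _|/val_inj -> _]; [exact: ltnW (s_mono uv)|].
rewrite mxE; case: (x =P s u) => [xu|]; case: (y =P s v) => [yv|] //=; rewrite ?mulr0 //.
by move: yx; rewrite xu yv ltnNge suv.
Qed.

End Embedding.

(* The increasing map 0, 1, ..., r-1, r |-> i, i+1, ..., i+r-1, j, which sends
   the corner (0,r) of an (r+1) x (r+1) matrix to position (i,j), i + r <= j. *)
Definition spread (n r : nat) (i j : 'I_n) (u : 'I_r.+1) : 'I_n :=
  insubd i (if (u : nat) == r then (j : nat) else i + u)%N.

Section Spread.
Variables (n r : nat) (i j : 'I_n).
Hypothesis ij : (i + r <= j)%N.

Lemma spreadE (u : 'I_r.+1) :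
  (spread i j u : nat) = if (u : nat) == r then (j : nat) else (i + u)%N.
Proof.
rewrite val_insubd; case: eqP => [_|ur]; first by rewrite ltn_ord.
by rewrite ifT //; have := ltn_ord u; have := ltn_ord j; lia.
Qed.

Lemma spread_mono (u v : 'I_r.+1) : (u < v)%N -> (spread i j u < spread i j v)%N.
Proof. by rewrite !spreadE; have := ltn_ord v; case: eqP; case: eqP; lia. Qed.

Lemma spread_ends :
  (0 < r)%N -> spread i j (ord0 : 'I_r.+1) = i /\ spread i j (ord_max : 'I_r.+1) = j.
Proof. by move=> r0; split; apply: val_inj => /=; rewrite spreadE /=; case: eqP; lia. Qed.

End Spread.

Definition dscale (K : fieldType) (n : nat) (i : 'I_n) (c : K) : 'M[K]_n :=
  diag_mx (\row_x (if x == i then c else 1)).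

Lemma dscale_conj_entry (K : fieldType) (n : nat) (Y : 'M[K]_n) i c x y :
  (dscale i c *m Y *m dscale i c^-1) x y =
  (if x == i then c else 1) * Y x y * (if y == i then c^-1 else 1).
Proof. by rewrite mul_mx_diag mul_diag_mx !mxE. Qed.

Lemma dscale_conj_delta (K : fieldType) (n : nat) (i j : 'I_n) (c : K) :
  i != j -> dscale i c *m delta_mx i j *m dscale i c^-1 = c *: delta_mx i j.
Proof.
move=> ij; apply/matrixP => x y; rewrite dscale_conj_entry !mxE.
have [_|_] := eqVneq x i; last by rewrite !mulr0 mul0r.
have [->|_] := eqVneq y j; last by rewrite !mulr0 mul0r.
by rewrite eq_sym (negbTE ij) !mulr1.
Qed.

Definition elem (K : fieldType) (n : nat) (a b : 'I_n) (t : K) : 'M[K]_n :=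
  1%:M + t *: delta_mx a b.

Lemma elem_mul (K : fieldType) (n : nat) (a b : 'I_n) (s t : K) :
  a != b -> elem a b s *m elem a b t = elem a b (s + t).
Proof.
move=> ab; rewrite /elem mulmxDl !mulmxDr !mul1mx mulmx1 -scalemxAl -scalemxAr.
rewrite mul_delta_mx_0 1?eq_sym // !scaler0 addr0 scalerDl.
by rewrite -addrA [t *: _ + _]addrC.
Qed.

Lemma elem_upper (K : fieldType) (n : nat) (a b : 'I_n) (t : K) :
  (a < b)%N -> upper_tri (elem a b t).
Proof.
move=> ab x y yx; rewrite !mxE; case: eqP => [xy|_]; first by move: yx; rewrite xy ltnn.
case: (x =P a) => [xa|]; case: (y =P b) => [yb|] //=; rewrite ?mulr0 ?add0r //.
by move: yx; rewrite xa yb ltnNge (ltnW ab).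
Qed.

Lemma elem_mull_entry (K : fieldType) (n : nat) (Y : 'M[K]_n) (a b : 'I_n) t x y :
  (elem a b t *m Y) x y = Y x y + (x == a)%:R * (t * Y b y).
Proof.
rewrite /elem mulmxDl mul1mx -scalemxAl !mxE; congr (_ + _).
rewrite (bigD1 b) //= !mxE eqxx andbT big1 ?addr0.
  by case: (x == a); rewrite ?mul1r ?mul0r ?mulr0.
by move=> z zb; rewrite !mxE (negbTE zb) andbF mul0r.
Qed.

Lemma elem_mulr_entry (K : fieldType) (n : nat) (Y : 'M[K]_n) (a b : 'I_n) t x y :
  (Y *m elem a b t) x y = Y x y + (y == b)%:R * (Y x a * t).
Proof.
rewrite /elem mulmxDr mulmx1 -scalemxAr !mxE; congr (_ + _).
rewrite (bigD1 a) //= !mxE eqxx big1 ?addr0.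
  by case: (y == b); rewrite ?mul1r ?mul0r ?mulr0 ?mulr1 // mulrC.
by move=> z za; rewrite !mxE (negbTE za) mulr0.
Qed.

Lemma elem_conj_entry (K : fieldType) (n : nat) (Y : 'M[K]_n) (a b : 'I_n) t x y :
  upper_tri Y -> (a < b)%N ->
  (elem a b t *m Y *m elem a b (- t)) x y =
  Y x y + (x == a)%:R * (t * Y b y) - (y == b)%:R * (Y x a * t).
Proof.
move=> uY ab; rewrite elem_mulr_entry !elem_mull_entry (uY b a ab).
by rewrite !mulr0 addr0 !mulrN.
Qed.

Lemma elem_conj_delta_row (K : fieldType) (n : nat) (a b j : 'I_n) (t : K) :
  a != b -> j != a ->
  elem a b t *m delta_mx b j *m elem a b (- t) = delta_mx b j + t *: delta_mx a j.
Proof.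
move=> ab ja; rewrite /elem mulmxDl mul1mx -scalemxAl mul_delta_mx.
rewrite mulmxDr mulmx1 -scalemxAr mulmxDl -scalemxAl !mul_delta_mx_0 //.
by rewrite scaler0 add0r !scaler0 addr0.
Qed.

Lemma elem_conj_delta_col (K : fieldType) (n : nat) (a b i : 'I_n) (t : K) :
  a != b -> i != b ->
  elem a b t *m delta_mx i a *m elem a b (- t) = delta_mx i a - t *: delta_mx i b.
Proof.
move=> ab ib; rewrite /elem mulmxDl mul1mx -scalemxAl mul_delta_mx_0 1?eq_sym //.
rewrite scaler0 addr0 mulmxDr mulmx1 -scalemxAr mul_delta_mx.
by rewrite scaleNr.
Qed.

Section ImageClosure.
Variables (K : fieldType) (m : nat) (p : ncpoly K m).
Hypothesis p_const0 : const_term p = 0.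

Lemma image_emb (k n : nat) (s : 'I_k -> 'I_n) (A : 'M[K]_k) :
  (forall u v : 'I_k, (u < v)%N -> (s u < s v)%N) ->
  in_pimage p A -> in_pimage p (emb s A).
Proof.
move=> s_mono [a [ua <-]]; exists (fun l => emb s (a l)); split.
  by move=> l; apply: emb_upper.
by rewrite /emb conj_eval //; exact: (sel_mul_tr _ (incr_inj s_mono)).
Qed.

Lemma image_dscale (n : nat) (Y : 'M[K]_n) (i : 'I_n) (c : K) :
  c != 0 -> in_pimage p Y -> in_pimage p (dscale i c *m Y *m dscale i c^-1).
Proof.
have diag_upper (d : 'rV[K]_n) : upper_tri (diag_mx d).
  by move=> x y yx; rewrite mxE; case: eqP => // xy; move: yx; rewrite xy ltnn.
move=> c0; apply: image_conj => //; try exact: diag_upper.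
rewrite mulmx_diag; apply/matrixP => x y.
by rewrite !mxE; case: (x == i); rewrite ?mulVf ?mulr1.
Qed.

Lemma image_elem (n : nat) (Y : 'M[K]_n) (a b : 'I_n) (t : K) :
  (a < b)%N -> in_pimage p Y -> in_pimage p (elem a b t *m Y *m elem a b (- t)).
Proof.
move=> ab; apply: image_conj => //; try exact: elem_upper.
by rewrite elem_mul ?addNr ?neq_ltn ?ab // /elem scale0r addr0.
Qed.

(* An element of p(T_{r+1}(K)) supported on the corner entry (0,r) only;
   it exists because ord(p) = r means p does not vanish on T_{r+1}(K). *)
Lemma corner_witness (r : nat) : has_order p r ->
  exists2 w : K, w != 0 & in_pimage p (w *: delta_mx (ord0 : 'I_r.+1) ord_max).
Proof.
case=> r0 [pr [pr1 _]].
have [A [pA A0]] : exists A : 'M[K]_r.+1, in_pimage p A /\ A <> 0.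
  apply: NNPP => noA; apply: pr1 => A pA; apply: NNPP => A0; apply: noA.
  by exists A.
have AE := corner_form (image_in_Tt p_const0 pr r0 (leqnSn r) pA).
exists (A ord0 ord_max); last by rewrite -AE.
by apply: contra_notN A0 => /eqP A00; rewrite AE A00 scale0r.
Qed.

(* Every multiple of a matrix unit E_{i,j} with j - i >= r = ord(p) lies in
   p(T_n(K)): embed the corner witness of T_{r+1}(K) along spread i j, then
   rescale by a diagonal conjugation. *)
Lemma unit_in_image (n r : nat) (i j : 'I_n) (c : K) :
  has_order p r -> (i + r <= j)%N -> in_pimage p (c *: delta_mx i j).
Proof.
move=> ord_r ij; have r0 : (0 < r)%N by case: ord_r.
have [-> | c0] := eqVneq c 0; first by rewrite scale0r; apply: image0.
have [w w0 pw] := corner_witness ord_r.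
have := image_emb (spread_mono ij) pw.
rewrite /emb -scalemxAr -scalemxAl -/(emb _ _) emb_delta.
have [-> ->] := spread_ends ij r0 => pwij.
have ji : i != j by apply/eqP => eij; move: ij; rewrite eij; lia.
have := image_dscale i (mulf_neq0 c0 (invr_neq0 w0)) pwij.
by rewrite -scalemxAr -scalemxAl dscale_conj_delta // scalerA mulrC divfK.
Qed.

End ImageClosure.

Section PolynomialFunctions.
Variable K : fieldType.

Definition polyfun (f : K -> K) := exists q : {poly K}, forall t, f t = q.[t].

Lemma polyfun_const (c : K) : polyfun (fun _ => c).
Proof. by exists c%:P => t; rewrite hornerC. Qed.

Lemma polyfun_mul (f g : K -> K) :
  polyfun f -> polyfun g -> polyfun (fun t => f t * g t).
Proof. by move=> [q qE] [r rE]; exists (q * r) => t; rewrite hornerM qE rE. Qed.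

Lemma polyfun_sum (I : Type) (s : seq I) (F : I -> K -> K) :
  (forall i, polyfun (F i)) -> polyfun (fun t => \sum_(i <- s) F i t).
Proof.
move=> pF; elim: s => [|i s [q qE]]; first by exists 0 => t; rewrite big_nil horner0.
by have [qi qiE] := pF i; exists (qi + q) => t; rewrite big_cons hornerD qiE qE.
Qed.

Lemma polyfun_prod (I : Type) (s : seq I) (F : I -> K -> K) :
  (forall i, polyfun (F i)) -> polyfun (fun t => \prod_(i <- s) F i t).
Proof.
move=> pF; elim: s => [|i s [q qE]]; first by exists 1 => t; rewrite big_nil hornerC.
by have [qi qiE] := pF i; exists (qi * q) => t; rewrite big_cons hornerM qiE qE.
Qed.

Definition polyfun_mx (k : nat) (M : K -> 'M[K]_k) :=
  forall x y, polyfun (fun t => M t x y).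

Lemma polyfun_mx_mul (k : nat) (M N : K -> 'M[K]_k) :
  polyfun_mx M -> polyfun_mx N -> polyfun_mx (fun t => M t *m N t).
Proof.
move=> pM pN x y; have [q qE] := polyfun_sum (index_enum 'I_k)
  (fun z => polyfun_mul (pM x z) (pN z y)).
by exists q => t; rewrite mxE qE.
Qed.

Lemma polyfun_mx_eval (m k : nat) (p : ncpoly K m) (a : K -> 'I_m -> 'M[K]_k) :
  (forall l, polyfun_mx (fun t => a t l)) -> polyfun_mx (fun t => nc_eval p (a t)).
Proof.
move=> pa.
have pw (w : seq 'I_m) : polyfun_mx (fun t => \big[mulmx/1%:M]_(i <- w) a t i).
  elim: w => [|l w IH] x y; first by exists (1%:M x y : K)%:P => t; rewrite big_nil hornerC.
  have [q qE] := polyfun_mx_mul (pa l) IH x y.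
  by exists q => t; rewrite big_cons qE.
move=> x y; have [q qE] := polyfun_sum p
  (fun u => polyfun_mul (polyfun_const u.1) (pw u.2 x y)).
by exists q => t; rewrite /nc_eval summxE -qE; apply: eq_bigr => u _; rewrite mxE.
Qed.

Lemma exists_nonroot (q : {poly K}) :
  infinite_field K -> q != 0 -> exists t, q.[t] != 0.
Proof.
move=> infK q0.
have [s [s_uniq s_size]] : exists s : seq K, uniq s /\ size s = size q.
  elim: (size q) => [|k [s [s_uniq s_size]]]; first by exists [::].
  by have [x xs] := infK s; exists (x :: s); rewrite /= xs s_uniq s_size.
have [s_roots | /allPn [t _ qt]] := boolP (all (root q) s); last by exists t.
by have := max_poly_roots q0 s_roots s_uniq; rewrite s_size ltnn.
Qed.

(* Two polynomial functions that are not identically zero have a common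
   non-zero point, since their product is a nonzero polynomial. *)
Lemma common_nonroot (f g : K -> K) (t1 t2 : K) :
  infinite_field K -> polyfun f -> polyfun g -> f t1 != 0 -> g t2 != 0 ->
  exists t, f t != 0 /\ g t != 0.
Proof.
move=> infK [q qE] [r rE] ft1 gt2.
have q0 : q != 0 by apply: contraNneq ft1 => q0; rewrite qE q0 horner0.
have r0 : r != 0 by apply: contraNneq gt2 => r0; rewrite rE r0 horner0.
have [t] := exists_nonroot infK (mulf_neq0 q0 r0).
by rewrite hornerM mulf_eq0 negb_or -qE -rE => /andP[]; exists t.
Qed.

End PolynomialFunctions.

Section Genericity.
Variables (K : fieldType) (m : nat) (p : ncpoly K m).
Hypothesis p_const0 : const_term p = 0.
Hypothesis infK : infinite_field K.

(* If each of finitely many entries of p(X) can be made nonzero by some upper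
   triangular X, then a single X makes all of them nonzero: along the segment
   X + t (Y - X) the entries are polynomial in t. *)
Lemma common_nonzero (n : nat) (s : seq ('I_n * 'I_n)) :
  (forall ij, ij \in s ->
     exists2 X : 'I_m -> 'M[K]_n, (forall l, upper_tri (X l)) & nc_eval p X ij.1 ij.2 != 0) ->
  exists2 X : 'I_m -> 'M[K]_n, (forall l, upper_tri (X l)) &
    forall ij, ij \in s -> nc_eval p X ij.1 ij.2 != 0.
Proof.
elim: s => [|ij s IH] sX; first by exists (fun _ => 0) => // l x y _; rewrite mxE.
have [X uX Xs] : exists2 X : 'I_m -> 'M[K]_n, (forall l, upper_tri (X l)) &
    forall kl, kl \in s -> nc_eval p X kl.1 kl.2 != 0.
  by apply: IH => kl kls; apply: sX; rewrite inE kls orbT.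
have [Y uY Yij] := sX ij (mem_head ij s).
pose Z t l := X l + t *: (Y l - X l).
have pZ x y : polyfun (fun t => nc_eval p (Z t) x y).
  apply: polyfun_mx_eval => l u v.
  by exists ((X l u v)%:P + 'X * ((Y l - X l) u v)%:P) => t; rewrite !mxE !hornerE.
have Z0 : nc_eval p (Z 0) = nc_eval p X.
  by apply: nc_eval_ext => l; rewrite /Z scale0r addr0.
have Z1 : nc_eval p (Z 1) = nc_eval p Y.
  by apply: nc_eval_ext => l; rewrite /Z scale1r addrC subrK.
have [||t [Zs Zij]] := common_nonroot (t1 := 0) (t2 := 1) infK
  (polyfun_prod s (fun kl => pZ kl.1 kl.2)) (pZ ij.1 ij.2).
- by rewrite Z0 prodf_seq_neq0; apply/allP => kl kls; exact: Xs.
- by rewrite Z1.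
exists (Z t) => [l x y yx|kl]; first by rewrite !mxE uX // uY // subrr mulr0 addr0.
rewrite inE => /orP[/eqP -> // | kls].
by move: Zs; rewrite prodf_seq_neq0 => /allP/(_ kl kls).
Qed.

Lemma full_band_value (n r : nat) : has_order p r ->
  exists2 X : 'I_m -> 'M[K]_n, (forall l, upper_tri (X l)) &
    forall i j : 'I_n, (j : nat) = (i + r)%N -> nc_eval p X i j != 0.
Proof.
move=> ord_r.
have [|X uX Xband] := @common_nonzero n
  [seq ij : 'I_n * 'I_n <- index_enum _ | (ij.2 : nat) == (ij.1 + r)%N].
  move=> [i j]; rewrite mem_filter /= => /andP[/eqP ji _].
  have [|X [uX XE]] := unit_in_image p_const0 1 ord_r (_ : (i + r <= j)%N); first lia.
  by exists X => //; rewrite XE !mxE !eqxx mulr1 oner_neq0.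
exists X => // i j ji; apply: (Xband (i, j)).
by rewrite mem_filter /= ji eqxx mem_index_enum.
Qed.

End Genericity.

(* Positions (x,y) of an n x n matrix on or above the diagonal are processed
   by increasing distance y - x to the diagonal, and for equal distance from
   the bottom row upwards; key n x y is the rank of (x,y) in this order. *)
Definition key (n x y : nat) : nat := ((y - x) * n + (n.-1 - x))%N.

Lemma key_lt_square (n x y : nat) : (x < n)%N -> (y < n)%N -> (key n x y < n * n)%N.
Proof.
move=> xn yn; have : ((y - x) * n <= n.-1 * n)%N by rewrite leq_mul2r; lia.
by rewrite /key; case: n xn {yn} => // n _; rewrite mulSn /=; lia.
Qed.

Lemma key_le (n i j x y : nat) : (x < n)%N -> (i < n)%N ->
  (j - i <= y - x)%N -> (x <= i)%N -> (key n i j <= key n x y)%N.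
Proof.
move=> xn i_n dij xi; rewrite /key leq_add //; first by rewrite leq_mul2r dij orbT.
by rewrite leq_sub2l.
Qed.

Lemma key_lt (n i j x y : nat) : (x < n)%N -> (i < n)%N ->
  (j - i <= y - x)%N -> (x < i)%N -> (key n i j < key n x y)%N.
Proof.
move=> xn i_n dij xi; have : ((j - i) * n <= (y - x) * n)%N by rewrite leq_mul2r dij orbT.
rewrite /key; lia.
Qed.

Lemma key_inj (n i j x y : nat) : (x < n)%N -> (i < n)%N ->
  (x <= y)%N -> (i <= j)%N -> key n x y = key n i j -> x = i /\ y = j.
Proof.
move=> xn i_n xy ij eqk.
have lex (d1 d2 e1 e2 : nat) : (e1 < n)%N -> (d1 < d2)%N -> (d1 * n + e1 < d2 * n + e2)%N.
  move=> e1n d12; have : (d1.+1 * n <= d2 * n)%N by rewrite leq_mul2r d12 orbT.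
  by rewrite mulSn; lia.
have ex : (n.-1 - x < n)%N by lia.
have ei : (n.-1 - i < n)%N by lia.
move: eqk; rewrite /key; case: (ltngtP (y - x) (j - i)) => d.
- by have := lex _ _ _ (n.-1 - i)%N ex d; lia.
- by have := lex _ _ _ (n.-1 - x)%N ei d; lia.
- by rewrite d; lia.
Qed.

Definition full_band (K : fieldType) (n r : nat) (Y : 'M[K]_n) :=
  forall x y : 'I_n, (y : nat) = (x + r)%N -> Y x y != 0.

Section Filling.
Variables (K : fieldType) (m : nat) (p : ncpoly K m) (n r : nat).
Hypotheses (p_const0 : const_term p = 0) (ord_r : has_order p r) (r_le_n : (r <= n)%N).

Let r_gt0 : (0 < r)%N. Proof. by case: ord_r. Qed.

Lemma image_below_band (Y : 'M[K]_n) (x y : 'I_n) :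
  in_pimage p Y -> (y < x + r)%N -> Y x y = 0.
Proof.
case: ord_r => _ [pr _] pY yx; apply: (image_in_Tt p_const0 pr r_gt0 r_le_n pY); lia.
Qed.

Lemma image_upper (Y : 'M[K]_n) : in_pimage p Y -> upper_tri Y.
Proof. by move=> pY x y yx; apply: image_below_band => //; lia. Qed.

Definition adjusts (Y Y' : 'M[K]_n) (i j : 'I_n) (z : K) :=
  [/\ in_pimage p Y', full_band r Y',
      forall x y : 'I_n, (key n x y < key n i j)%N -> Y' x y = Y x y & Y' i j = z].

(* A band entry is adjusted by a diagonal conjugation scaling row and column i. *)
Lemma adjust_band (Y : 'M[K]_n) (i j : 'I_n) (z : K) :
  (j : nat) = (i + r)%N -> z != 0 -> in_pimage p Y -> full_band r Y ->
  exists Y', adjusts Y Y' i j z.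
Proof.
move=> ji z0 pY bY; have Yij := bY i j ji.
pose c := z / Y i j; have c0 : c != 0 by rewrite mulf_neq0 ?invr_neq0.
have ij : (j == i) = false by apply/eqP => eji; move: ji; rewrite eji; lia.
exists (dscale i c *m Y *m dscale i c^-1); split.
- exact: image_dscale.
- move=> x y yx; rewrite dscale_conj_entry !mulf_neq0 ?bY //.
    by case: (x == i); rewrite ?oner_neq0.
  by case: (y == i); rewrite ?oner_neq0 ?invr_neq0.
- move=> x y kxy; rewrite dscale_conj_entry.
  case: (ltnP y (x + r)) => yx; first by rewrite image_below_band // mulr0 mul0r.
  have [xi|_] := eqVneq x i.
    by subst x; move: kxy; rewrite ltnNge key_le //; lia.
  have [yi|_] := eqVneq y i; last by rewrite mul1r mulr1.
  by subst y; move: kxy; rewrite ltnNge ltnW // key_lt //; lia.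
- by rewrite dscale_conj_entry eqxx ij mulr1 divfK.
Qed.

(* An entry above the band is adjusted by adding a multiple of row j - r
   (whose band entry sits in column j) to row i. *)
Lemma adjust_above (Y : 'M[K]_n) (i j : 'I_n) (z : K) :
  (i + r < j)%N -> in_pimage p Y -> full_band r Y -> exists Y', adjusts Y Y' i j z.
Proof.
move=> ij pY bY; have bP : (j - r < n)%N by have := ltn_ord j; lia.
pose b := Ordinal bP; have bE : (b : nat) = (j - r)%N by [].
have ib : (i < b)%N by lia.
have Ybj : Y b j != 0 by apply: bY; lia.
pose t := (z - Y i j) / Y b j.
have uY := image_upper pY.
pose Y' := elem i b t *m Y *m elem i b (- t).
(* The conjugation only changes (x,y) through row b (if x = i) and column i
   (if y = b); these contributions vanish below the band. *)
have Y'E (x y : 'I_n) : ((x : nat) = i -> (y < b + r)%N) ->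
    ((y : nat) = b -> (i < x + r)%N) -> Y' x y = Y x y.
  move=> rowx colx; rewrite /Y' elem_conj_entry //.
  have -> : (x == i)%:R * (t * Y b y) = 0.
    case: eqP => [xi|_]; last by rewrite mul0r.
    by rewrite image_below_band ?mulr0 //; apply/rowx/(congr1 val xi).
  have -> : (y == b)%:R * (Y x i * t) = 0.
    case: eqP => [yb|_]; last by rewrite mul0r.
    by rewrite image_below_band ?mul0r ?mulr0 //; apply/colx/(congr1 val yb).
  by rewrite addr0 subr0.
exists Y'; split.
- exact: image_elem.
- by move=> x y yx; rewrite Y'E; [exact: bY | move=> xi | move=> yb]; lia.
- move=> x y kxy; apply: Y'E => [xi | yb]; rewrite ltnNge; apply/negP => bad;
    move: kxy; apply/negP; rewrite -leqNgt.
  + by apply: key_le => //; lia.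
  + by apply/ltnW/key_lt => //; lia.
- rewrite /Y' elem_conj_entry // eqxx mul1r.
  have -> : (j == b) = false by apply/eqP => jb; move: bE; rewrite -jb; lia.
  by rewrite mul0r subr0 /t divfK // addrC subrK.
Qed.

Hypothesis infK : infinite_field K.

(* Any Z in T_n(K)^(r-1) with a full band lies in p(T_n(K)): starting from an
   element of p(T_n(K)) with a full band, the entries of Z are installed one
   at a time in increasing key order. *)
Lemma image_of_full_band (Z : 'M[K]_n) :
  in_Tt r.-1 Z -> full_band r Z -> in_pimage p Z.
Proof.
move=> ZT bZ.
have Z0 (x y : 'I_n) : (y < x + r)%N -> Z x y = 0 by move=> yx; apply: ZT; lia.
have agree K0 : exists2 Y, in_pimage p Y /\ full_band r Y &
    forall x y : 'I_n, (key n x y < K0)%N -> Y x y = Z x y.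
  elim: K0 => [|K0 [Y [pY bY] YZ]].
    have [X uX bX] := full_band_value p_const0 infK n ord_r.
    by exists (nc_eval p X) => //; split=> //; exists X.
  have [/existsP[[i j] /andP[/= ij /eqP kij]] | none] :=
    boolP [exists ij : 'I_n * 'I_n, (ij.1 + r <= ij.2)%N && (key n ij.1 ij.2 == K0)].
    have [Y' [pY' bY' Y'Y Y'ij]] : exists Y', adjusts Y Y' i j (Z i j).
      move: ij; rewrite leq_eqVlt => /orP[/eqP ji | ij]; last exact: adjust_above.
      by apply: adjust_band => //; apply: bZ.
    exists Y' => // x y; rewrite ltnS leq_eqVlt => /orP[/eqP kxy | kxy]; last first.
      by rewrite Y'Y ?kij // YZ.
    case: (ltnP y (x + r)) => yx; first by rewrite (image_below_band pY') ?Z0.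
    have xy : (x <= y)%N by lia.
    have [xi yj] := key_inj (ltn_ord x) (ltn_ord i) xy (leq_trans (leq_addr r i) ij)
      (etrans kxy (esym kij)).
    by rewrite (val_inj xi) (val_inj yj).
  exists Y => // x y; rewrite ltnS leq_eqVlt => /orP[/eqP kxy | ]; last exact: YZ.
  case: (ltnP y (x + r)) => yx; first by rewrite (image_below_band pY) ?Z0.
  by case/existsP: none; exists (x, y); rewrite /= yx kxy eqxx.
have [Y [pY _] YZ] := agree (n * n)%N.
suff -> : Z = Y by [].
by apply/matrixP => x y; rewrite YZ // key_lt_square.
Qed.

End Filling.

Lemma three_entries (K : fieldType) (r : nat) (A : 'M[K]_r.+2) : (0 < r)%N ->
  in_Tt r.-1 A ->
  A = A ord0 (inord r) *: delta_mx ord0 (inord r)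
    + A (inord 1) ord_max *: delta_mx (inord 1) ord_max
    + A ord0 ord_max *: delta_mx ord0 ord_max.
Proof.
move=> r0 AT; apply/matrixP => x y; rewrite !mxE -!(inj_eq val_inj) /= !inordK; try lia.
case: (leqP y (x + r.-1)) => yx.
  have /negbTE -> : ~~ (((x : nat) == 0%N) && ((y : nat) == r)) by lia.
  have /negbTE -> : ~~ (((x : nat) == 1%N) && ((y : nat) == r.+1)) by lia.
  have /negbTE -> : ~~ (((x : nat) == 0%N) && ((y : nat) == r.+1)) by lia.
  by rewrite AT // !mulr0 !addr0.
have yn := ltn_ord y.
have [[xv yv] | [[xv yv] | [xv yv]]] : ((x : nat) = 0%N /\ (y : nat) = r) \/
    ((x : nat) = 0%N /\ (y : nat) = r.+1) \/ ((x : nat) = 1%N /\ (y : nat) = r.+1) by lia.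
all: rewrite xv yv /= eqxx ?(ltn_eqF (ltnSn r)) ?(gtn_eqF (ltnSn r)) /=.
all: rewrite ?mulr1 ?mulr0 ?addr0 ?add0r.
all: by congr (A _ _); apply: val_inj; rewrite /= ?inordK; lia.
Qed.

(* Each of the
   three free entries is realised by a scaled matrix unit; two of them are
   combined by an elementary conjugation, all three by image_of_full_band. *)
Lemma small_case (K : fieldType) (m r : nat) (p : ncpoly K m) :
  const_term p = 0 -> has_order p r -> infinite_field K ->
  forall A : 'M[K]_r.+2, in_Tt r.-1 A -> in_pimage p A.
Proof.
move=> p0 ord_r infK A AT; have r0 : (0 < r)%N by case: ord_r.
have AE := three_entries r0 AT.
set al := A ord0 (inord r) in AE; set be := A (inord 1) ord_max in AE.
set ga := A ord0 ord_max in AE.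
have [al0 | al0] := eqVneq al 0; have [be0 | be0] := eqVneq be 0.
- rewrite AE al0 be0 !scale0r !add0r; apply: (unit_in_image p0 _ ord_r).
  by rewrite /= add0n.
- have lt01 : ((ord0 : 'I_r.+2) < (inord 1 : 'I_r.+2))%N by rewrite inordK.
  have band1 : ((inord 1 : 'I_r.+2) + r <= (ord_max : 'I_r.+2))%N by rewrite inordK.
  have := image_elem p0 (ga / be) lt01 (unit_in_image p0 be ord_r band1).
  rewrite -scalemxAr -scalemxAl elem_conj_delta_row ?neq_ltn ?lt01 //.
  by rewrite scalerDr scalerA mulrC divfK // AE al0 scale0r add0r.
- have ltr : ((inord r : 'I_r.+2) < (ord_max : 'I_r.+2))%N by rewrite inordK.
  have band0 : ((ord0 : 'I_r.+2) + r <= (inord r : 'I_r.+2))%N by rewrite inordK.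
  have := image_elem p0 (- (ga / al)) ltr (unit_in_image p0 al ord_r band0).
  rewrite -scalemxAr -scalemxAl elem_conj_delta_col ?neq_ltn ?ltr //.
  by rewrite scalerBr scalerA mulrN mulrC divfK // scaleNr opprK AE be0 scale0r addr0.
- apply: (image_of_full_band p0 ord_r (leqW (leqnSn r)) infK AT) => x y yx.
  have yn := ltn_ord y.
  have [[xv yv] | [xv yv]] : ((x : nat) = 0%N /\ (y : nat) = r) \/
    ((x : nat) = 1%N /\ (y : nat) = r.+1) by lia.
  + have -> : x = ord0 by apply: val_inj.
    by have -> : y = inord r by apply: val_inj; rewrite /= inordK.
  + have -> : x = inord 1 by apply: val_inj; rewrite /= inordK.
    by have -> : y = ord_max by apply: val_inj.
Qed.

(* Over an infinite field every matrix of T_n(K)^(r-1) is the sum of two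
   matrices of T_n(K)^(r-1) with a full band: on the band, split each entry
   a as b + (a - b) with b avoiding both 0 and a. *)
Lemma split_full_band (K : fieldType) (n r : nat) (A : 'M[K]_n) :
  infinite_field K -> (0 < r)%N -> in_Tt r.-1 A ->
  exists B C : 'M[K]_n,
    [/\ in_Tt r.-1 B, full_band r B, in_Tt r.-1 C, full_band r C & A = B + C].
Proof.
move=> infK r0 AT.
pose b (x y : 'I_n) := xchoose (infK [:: 0; A x y]).
have bP x y : b x y \notin [:: 0; A x y] := xchooseP (infK _).
have b0 x y : b x y != 0 by move: (bP x y); rewrite !inE negb_or => /andP[].
have Ab0 x y : A x y - b x y != 0.
  by move: (bP x y); rewrite !inE negb_or subr_eq0 => /andP[_]; rewrite eq_sym.
exists (\matrix_(x, y) if (y : nat) == (x + r)%N then b x y else A x y).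
exists (\matrix_(x, y) if (y : nat) == (x + r)%N then A x y - b x y else 0).
split=> [x y yx | x y yx | x y yx | x y yx |].
- by rewrite mxE; case: eqP => yr; [lia | exact: AT].
- by rewrite mxE yx eqxx.
- by rewrite mxE; case: eqP => yr //; lia.
- by rewrite mxE yx eqxx.
- apply/matrixP => x y; rewrite !mxE; case: eqP => _; last by rewrite addr0.
  by rewrite addrC subrK.
Qed.

Theorem theorem1p3 (K : fieldType) (n m r : nat) (p : ncpoly K m) :
  (2 <= n)%N -> (1 <= m)%N -> infinite_field K ->
  const_term p = 0 ->
  has_order p r -> (1 < r)%N -> (r < n.-1)%N ->
  (forall A : 'M[K]_n,
     (exists B C : 'M[K]_n, in_pimage p B /\ in_pimage p C /\ A = B + C)
     <-> in_Tt r.-1 A)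
  /\ ((r = n - 2)%N ->
      forall A : 'M[K]_n, in_pimage p A <-> in_Tt (n - 3) A).
Proof.
move=> _ _ infK p0 ord_r r1 rn.
have r0 : (0 < r)%N by lia.
have r_le_n : (r <= n)%N by lia.
have image_T := image_in_Tt p0 (proj1 (proj2 ord_r)) r0 r_le_n.
have full := image_of_full_band p0 ord_r r_le_n infK.
split=> [A | rn2].
  split=> [[B [C [pB [pC ->]]]] x y yx | AT].
    by rewrite mxE (image_T _ pB) // (image_T _ pC) // addr0.
  have [B [C [BT bB CT bC ->]]] := split_full_band infK r0 AT.
  by exists B, C; split; [exact: full | split; [exact: full |]].
have en : n = r.+2 by lia.
subst n; rewrite (_ : (r.+2 - 3 = r.-1)%N); last by lia.
by move=> A; split; [exact: image_T | exact: small_case].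
Qed.
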